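(* Let $\kappa$ be a regular infinite cardinal and $\mu$ a singular cardinal with $\mathrm{cf}(\mu)=\kappa$. Then $\mathrm{add}(\mathcal M_\kappa({}^{\kappa}\mu,\kappa))=\mathrm{add}(\mathcal M_\kappa({}^{\mu}\mu,\mathrm{bd}))=\mathrm{add}(\mathcal M_\kappa({}^{\mu}\mu,\kappa))=\mathrm{add}(\mathcal M_\kappa({}^{\mu}2,\mu))=\mathrm{add}(\mathcal M_\kappa({}^{\mu}\mu,\mu))$ $=\mathrm{cov}(\mathcal M_\kappa({}^{\kappa}\mu,\kappa))=\mathrm{cov}(\mathcal M_\kappa({}^{\mu}\mu,\mathrm{bd}))=\mathrm{cov}(\mathcal M_\kappa({}^{\mu}\mu,\kappa))=\mathrm{cov}(\mathcal M_\kappa({}^{\mu}2,\mu))=\mathrm{cov}(\mathcal M_\kappa({}^{\mu}\mu,\mu))=\kappa^+$.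
   Context: For ordinals $\delta,\rho$, ${}^{\delta}\rho$ is the set of functions $\delta\to\rho$; for a partial function $s\colon\delta\rightharpoonup\rho$, $[s]=\{f\in{}^{\delta}\rho: s\subseteq f\}$. Topologies on ${}^{\delta}\rho$: ${<}\kappa$-box (base $[s]$, $|\mathrm{dom}(s)|<\kappa$), denoted $\kappa$; ${<}\mu$-box (base $[s]$, $|\mathrm{dom}(s)|<\mu$), denoted $\mu$; bounded (base $[s]$, $s\in{}^{\alpha}\rho$, $\alpha<\delta$), denoted $\mathrm{bd}$. A set is $\kappa$-meagre if it is a union of at most $\kappa$ nowhere dense sets; $\mathcal M_\kappa(X,\tau)$ is the ideal of $\kappa$-meagre subsets of $(X,\tau)$. For a proper ideal $\mathcal I$ on $X$: $\mathrm{add}(\mathcal I)$ is the least size of $A\subseteq\mathcal I$ with $\bigcup A\notin\mathcal I$; $\mathrm{cov}(\mathcal I)$ is the least size of $C\subseteq\mathcal I$ with $\bigcup C=X$. *)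

(* combinatorial set theory modelled with types.
   Ordinals are represented by well-ordered types, cardinalities are compared
   via injections, subsets are predicates. *)

Definition inj {A B : Type} (f : A -> B) : Prop := forall x y, f x = f y -> x = y.
Definition bij {A B : Type} (f : A -> B) : Prop := inj f /\ forall y, exists x, f x = y.

Definition le_card (A B : Type) : Prop := exists f : A -> B, inj f.
Definition lt_card (A B : Type) : Prop := le_card A B /\ ~ le_card B A.

Record woType := WOType {
  wo_car :> Type;
  wo_lt : wo_car -> wo_car -> Prop;
  wo_irrefl : forall x, ~ wo_lt x x;
  wo_trans : forall x y z, wo_lt x y -> wo_lt y z -> wo_lt x z;
  wo_total : forall x y, wo_lt x y \/ x = y \/ wo_lt y x;
  wo_wf : well_founded wo_lt }.
Arguments wo_lt {w}.

(* W is an initial ordinal, i.e. a cardinal: every proper initial segment is smaller. *)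
Definition is_cardinal (W : woType) : Prop :=
  forall a : W, lt_card {x : W | wo_lt x a} W.

Definition infinite (A : Type) : Prop := le_card nat A.

Definition regular (W : woType) : Prop :=
  is_cardinal W /\
  forall S : W -> Prop, lt_card {x : W | S x} W -> exists b : W, forall x, S x -> wo_lt x b.

Definition cofinal {W : woType} (C : W -> Prop) : Prop :=
  forall x : W, exists y, C y /\ (x = y \/ wo_lt x y).

Definition cf_is (M : woType) (K : Type) : Prop :=
  (exists C : M -> Prop, cofinal C /\ exists f : {x : M | C x} -> K, bij f) /\
  (forall C : M -> Prop, cofinal C -> le_card K {x : M | C x}).

Definition is_succ_card (K L : Type) : Prop :=
  lt_card K L /\ forall Y : Type, lt_card K Y -> le_card L Y.

Definition interior {X : Type} (Bs : (X -> Prop) -> Prop) (S : X -> Prop) (x : X) : Prop :=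
  exists B, Bs B /\ B x /\ forall y, B y -> S y.
Definition closure {X : Type} (Bs : (X -> Prop) -> Prop) (S : X -> Prop) (x : X) : Prop :=
  forall B, Bs B -> B x -> exists y, B y /\ S y.
Definition nowhere_dense {X : Type} (Bs : (X -> Prop) -> Prop) (N : X -> Prop) : Prop :=
  forall x, ~ interior Bs (closure Bs N) x.

(* [s] for a partial function s with domain D: {f | s ⊆ f} *)
Definition cyl {D R : Type} (dom : D -> Prop) (s : D -> R) (f : D -> R) : Prop :=
  forall i, dom i -> f i = s i.

Definition box_base (C D R : Type) (B : (D -> R) -> Prop) : Prop :=
  exists (dom : D -> Prop) (s : D -> R),
    lt_card {i : D | dom i} C /\ forall f, B f <-> cyl dom s f.

Definition bd_base (D : woType) (R : Type) (B : (D -> R) -> Prop) : Prop :=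
  exists (alpha : D) (s : D -> R),
    forall f, B f <-> cyl (fun i => wo_lt i alpha) s f.

Definition meagre_k (K : Type) {X : Type} (Bs : (X -> Prop) -> Prop) (S : X -> Prop) : Prop :=
  exists F : K -> X -> Prop, (forall k, nowhere_dense Bs (F k)) /\
    forall x, S x <-> exists k, F k x.

Definition add_is {X : Type} (I : (X -> Prop) -> Prop) (L : Type) : Prop :=
  (forall (A : Type) (F : A -> X -> Prop), lt_card A L -> (forall a, I (F a)) ->
      I (fun x => exists a, F a x)) /\
  (exists F : L -> X -> Prop, (forall a, I (F a)) /\ ~ I (fun x => exists a, F a x)).

Definition cov_is {X : Type} (I : (X -> Prop) -> Prop) (L : Type) : Prop :=
  (forall (A : Type) (F : A -> X -> Prop), lt_card A L -> (forall a, I (F a)) ->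
      ~ (forall x, exists a, F a x)) /\
  (exists F : L -> X -> Prop, (forall a, I (F a)) /\ forall x, exists a, F a x).

From Stdlib Require Import Classical ClassicalEpsilon FunctionalExtensionality Lia PeanoNat Wellfounded Relation_Operators Lexicographic_Product.

(* In all five spaces the basic sets are cylinders [s] whose domains range over an ideal closed
   under unions of fewer than κ sets (size < κ, size < μ, or bounded in μ; the last two because
   cf μ = κ).  So a fusion of basic sets of length κ escapes any κ nowhere dense sets: the space
   is not κ-meagre, and as κ × κ ≈ κ (Hessenberg) the κ-meagre sets form a κ^+-additive ideal.
   Conversely, let every point x "decode" at most one value v < μ at each position j < κ, in such
   a way that the points decoding v nowhere form a nowhere dense set.  Each x decodes at most κ
   values, so any κ^+ ≤ μ of these sets cover the space; hence add = cov = κ^+.  Decoding reads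
   x(j), x(c j) for a cofinal c : κ -> μ, or x at an injective image of κ; for the <μ-box
   topologies x decodes v at j if, splitting the segment below c j into |c j| columns, v is the
   unique column on which x takes a designated value |c j| times: a basic set fixes fewer than
   |c j| points there. *)

(** * Cardinal comparison *)

Lemma le_card_refl (A : Type) : le_card A A.
Proof. exists (fun x => x). now intros x y. Qed.

Lemma le_card_trans (A B C : Type) : le_card A B -> le_card B C -> le_card A C.
Proof. intros [f Hf] [g Hg]. exists (fun x => g (f x)). intros x y H. apply Hf, Hg, H. Qed.

Lemma lt_le_card_trans (A B C : Type) : lt_card A B -> le_card B C -> lt_card A C.
Proof.
  intros [HAB HBA] HBC. split; [exact (le_card_trans _ _ _ HAB HBC)|].
  intro HCA. exact (HBA (le_card_trans _ _ _ HBC HCA)).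
Qed.

Lemma le_lt_card_trans (A B C : Type) : le_card A B -> lt_card B C -> lt_card A C.
Proof.
  intros HAB [HBC HCB]. split; [exact (le_card_trans _ _ _ HAB HBC)|].
  intro HCA. exact (HCB (le_card_trans _ _ _ HCA HAB)).
Qed.

Lemma proj1_sig_inj {T : Type} {P : T -> Prop} (a b : {x | P x}) :
  proj1_sig a = proj1_sig b -> a = b.
Proof.
  destruct a as [a pa], b as [b pb]; simpl; intros <-.
  f_equal. apply proof_irrelevance.
Qed.

Lemma le_card_sub {T : Type} (P Q : T -> Prop) :
  (forall x, P x -> Q x) -> le_card {x | P x} {x | Q x}.
Proof.
  intro H. exists (fun x => exist Q (proj1_sig x) (H _ (proj2_sig x))).
  intros x y E. apply proj1_sig_inj. exact (f_equal (@proj1_sig _ _) E).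
Qed.

Lemma le_card_sig {T : Type} (P : T -> Prop) : le_card {x | P x} T.
Proof. exists (@proj1_sig _ _). intros x y. apply proj1_sig_inj. Qed.

Lemma le_card_prod (A A' B B' : Type) :
  le_card A A' -> le_card B B' -> le_card (A * B) (A' * B').
Proof.
  intros [f Hf] [g Hg]. exists (fun p => (f (fst p), g (snd p))).
  intros [a b] [c d] E. injection E as E1 E2. f_equal; auto.
Qed.

Lemma le_card_surj {A B : Type} (g : B -> A) : (forall a, exists b, g b = a) -> le_card A B.
Proof.
  intro H. exists (fun a => proj1_sig (constructive_indefinite_description _ (H a))).
  intros x y E.
  destruct (constructive_indefinite_description _ (H x)) as [a <-].
  destruct (constructive_indefinite_description _ (H y)) as [b <-]. simpl in E. now subst.
Qed.

Lemma le_card_empty (A B : Type) : ~ inhabited A -> le_card A B.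
Proof. intro nA. exists (fun a => False_rect _ (nA (inhabits a))). intro x. case (nA (inhabits x)). Qed.

Definition Fin (n : nat) := {i : nat | i < n}.

Lemma pigeonhole : forall n (f : nat -> nat),
  (forall i, f i < n) -> (forall i j, f i = f j -> i = j) -> False.
Proof.
  induction n as [|n IH]; intros f Hb Hi; [specialize (Hb 0); lia|].
  destruct (classic (exists i0, f i0 = n)) as [[i0 Hi0]|Hno].
  - apply (IH (fun i => f (if i <? i0 then i else S i))).
    + intro i. assert (Hne : forall k, k <> i0 -> f k < n).
      { intros k Hk. assert (f k <> n) by (intro E; apply Hk, Hi; congruence). specialize (Hb k). lia. }
      destruct (Nat.ltb_spec i i0); apply Hne; lia.
    + intros i j E. destruct (Nat.ltb_spec i i0), (Nat.ltb_spec j i0); apply Hi in E; lia.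
  - apply (IH f); auto. intro i. specialize (Hb i). assert (f i <> n) by eauto. lia.
Qed.

Lemma Fin_not_infinite n : ~ infinite (Fin n).
Proof.
  intros [e He]. apply (pigeonhole n (fun i => proj1_sig (e i))).
  - intro i. exact (proj2_sig (e i)).
  - intros i j E. apply He, proj1_sig_inj, E.
Qed.

Lemma le_card_prod_Fin (A B : Type) n m :
  le_card A (Fin n) -> le_card B (Fin m) -> le_card (A * B) (Fin (n * m)).
Proof.
  intros [f Hf] [g Hg].
  assert (Hlt : forall p : A * B, m * proj1_sig (f (fst p)) + proj1_sig (g (snd p)) < n * m).
  { intros [a b]; simpl. destruct (f a) as [i Hi], (g b) as [j Hj]; simpl. nia. }
  exists (fun p => exist (fun i => i < n * m) _ (Hlt p)).
  intros [a b] [c d] E. apply (f_equal (@proj1_sig _ _)) in E. simpl in E.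
  apply Nat.div_mod_unique in E; [|exact (proj2_sig (g b))|exact (proj2_sig (g d))].
  destruct E as [E1 E2]. f_equal; [apply Hf|apply Hg]; now apply proj1_sig_inj.
Qed.

Lemma bool_le_Fin2 : le_card bool (Fin 2).
Proof.
  assert (Hb : forall b : bool, (if b then 1 else 0) < 2) by (intros []; auto).
  exists (fun b => exist (fun i => i < 2) _ (Hb b)).
  intros [] [] E; auto; apply (f_equal (@proj1_sig _ _)) in E; discriminate.
Qed.

Lemma lt_card_Fin_infinite (A W : Type) n : infinite W -> le_card A (Fin n) -> lt_card A W.
Proof.
  intros HW HA. split.
  - apply (le_card_trans _ _ _ HA), (le_card_trans _ nat); [apply le_card_sig|exact HW].
  - intro HWA. apply (Fin_not_infinite n).
    exact (le_card_trans _ _ _ HW (le_card_trans _ _ _ HWA HA)).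
Qed.

Definition wf_rec {T : Type} {R : T -> T -> Prop} (wf : well_founded R) {A : Type}
  (G : forall x, (forall y, R y x -> A) -> A) : T -> A := Fix wf (fun _ => A) G.

Lemma wf_rec_eq {T : Type} {R : T -> T -> Prop} (wf : well_founded R) {A : Type}
  (G : forall x, (forall y, R y x -> A) -> A) x :
  wf_rec wf G x = G x (fun y _ => wf_rec wf G y).
Proof.
  unfold wf_rec. rewrite Fix_eq; [reflexivity|].
  intros x0 f g H. f_equal.
  apply functional_extensionality_dep; intro y; apply functional_extensionality_dep; intro; apply H.
Qed.

(* Transfinite greedy choice: send p to an element of X missed by all R-predecessors. *)
Lemma greedy_injection (T X : Type) (R : T -> T -> Prop) :
  well_founded R -> (forall p q, p <> q -> R p q \/ R q p) ->
  (forall p, ~ le_card X {q | R q p}) -> le_card T X.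
Proof.
  intros wf tot Hsmall.
  destruct (classic (inhabited X)) as [iX|nX].
  2: { destruct (classic (inhabited T)) as [[p]|nT]; [|exact (le_card_empty _ _ nT)].
       case (Hsmall p (le_card_empty _ _ nX)). }
  set (g := wf_rec wf (fun p (f : forall q, R q p -> X) =>
              epsilon iX (fun x => forall q (h : R q p), f q h <> x))).
  assert (Hg : forall p q, R q p -> g q <> g p).
  { intro p. assert (E : g p = epsilon iX (fun x => forall q, R q p -> g q <> x))
      by (unfold g at 1; rewrite wf_rec_eq; reflexivity).
    rewrite E. apply epsilon_spec, NNPP. intro Hn. apply (Hsmall p).
    apply (le_card_surj (fun q : {q | R q p} => g (proj1_sig q))).
    intro x. apply NNPP; intro Hx. apply Hn. exists x. intros q h E'. apply Hx. now exists (exist _ q h). }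
  exists g. intros x y E. apply NNPP; intro Hne.
  destruct (tot x y Hne) as [H|H]; [apply (Hg y x H)|apply (Hg x y H)]; congruence.
Qed.

Definition seg {W : woType} (a : W) := {x : W | wo_lt x a}.

Lemma wo_lt_total (W : woType) (p q : W) : p <> q -> wo_lt p q \/ wo_lt q p.
Proof. intro Hne. destruct (wo_total W p q) as [?|[?|?]]; tauto. Qed.

Lemma le_card_wo_or_seg (W : woType) (A : Type) :
  le_card W A \/ exists a : W, le_card A (seg a).
Proof.
  destruct (classic (exists a : W, le_card A (seg a))) as [H|H]; [now right|left].
  apply (greedy_injection W A wo_lt (wo_wf W) (wo_lt_total W)).
  intros p Hp. apply H. now exists p.
Qed.

Lemma le_card_wo_total (W : woType) (A : Type) : le_card W A \/ le_card A W.
Proof.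
  destruct (le_card_wo_or_seg W A) as [H|[a H]]; [now left|right].
  exact (le_card_trans _ _ _ H (le_card_sig _)).
Qed.

Definition nat_wo : woType :=
  WOType nat lt Nat.lt_irrefl Nat.lt_trans Nat.lt_total Wf_nat.lt_wf.

Lemma infinite_or_Fin (A : Type) : infinite A \/ exists n, le_card A (Fin n).
Proof. exact (le_card_wo_or_seg nat_wo A). Qed.

Lemma option_le_card_infinite (A : Type) : infinite A -> le_card (option A) A.
Proof.
  intros [e He].
  set (shift := fun s : A =>
    match excluded_middle_informative (exists n, e n = s) with
    | left h => e (S (proj1_sig (constructive_indefinite_description _ h)))
    | right _ => s end).
  assert (Hshift : forall n, shift (e n) = e (S n)).
  { intro n. unfold shift. destruct (excluded_middle_informative _) as [h|h]; [|case h; eauto].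
    destruct (constructive_indefinite_description _ h) as [m Hm]. simpl. now apply He in Hm as ->. }
  assert (Hfix : forall s, (forall n, e n <> s) -> shift s = s).
  { intros s Hs. unfold shift. destruct (excluded_middle_informative _) as [[n Hn]|h]; [case (Hs n Hn)|easy]. }
  exists (fun o => match o with None => e 0 | Some s => shift s end).
  assert (Hsplit : forall s, (exists n, e n = s) \/ forall n, e n <> s)
    by (intro s; destruct (classic (exists n, e n = s)); [left|right]; eauto).
  intros [x|] [y|] E; try reflexivity.
  - destruct (Hsplit x) as [[n <-]|Hx], (Hsplit y) as [[m <-]|Hy];
      rewrite ?Hshift, ?Hfix in E by assumption.
    + apply He in E. injection E as ->. reflexivity.
    + case (Hy _ E).
    + case (Hx _ (eq_sym E)).
    + now f_equal.
  - destruct (Hsplit x) as [[n <-]|Hx]; rewrite ?Hshift, ?Hfix in E by assumption.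
    + apply He in E. discriminate.
    + case (Hx _ (eq_sym E)).
  - destruct (Hsplit y) as [[n <-]|Hy]; rewrite ?Hshift, ?Hfix in E by assumption.
    + apply He in E. discriminate.
    + case (Hy _ E).
Qed.

Lemma option_le_card_Fin (A : Type) n : le_card A (Fin n) -> le_card (option A) (Fin (S n)).
Proof.
  intros [f Hf].
  assert (Hlt : forall o : option A, match o with Some a => proj1_sig (f a) | None => n end < S n).
  { intros [a|]; [pose proof (proj2_sig (f a))|]; simpl in *; lia. }
  exists (fun o => exist (fun i => i < S n) _ (Hlt o)).
  intros [x|] [y|] E; apply (f_equal (@proj1_sig _ _)) in E; simpl in E; try reflexivity.
  - f_equal. now apply Hf, proj1_sig_inj.
  - pose proof (proj2_sig (f x)); simpl in *; lia.
  - pose proof (proj2_sig (f y)); simpl in *; lia.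
Qed.

Definition wle {W : woType} (x y : W) := wo_lt x y \/ x = y.

Lemma wle_lt_trans (W : woType) (x y z : W) : wle x y -> wo_lt y z -> wo_lt x z.
Proof. intros [H| ->] H2; [exact (wo_trans W _ _ _ H H2)|exact H2]. Qed.

Lemma wle_total (W : woType) (x y : W) : wle x y \/ wle y x.
Proof. unfold wle. destruct (wo_total W x y) as [?|[?|?]]; auto. Qed.

(* In a down-closed infinite set, a maximum [c] would give [P ≤ option (seg c) ≤ seg c]. *)
Lemma exists_gt_in_down_closed (W : woType) (P : W -> Prop) :
  (forall x y, P y -> wo_lt x y -> P x) -> infinite {x | P x} ->
  (forall b, P b -> ~ le_card {x | P x} (seg b)) ->
  forall c, P c -> exists d, P d /\ wo_lt c d.
Proof.
  intros Hdown Hinf Hsmall c Pc. apply NNPP; intro Hn.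
  assert (Hmax : forall x, P x -> wo_lt x c \/ x = c).
  { intros x Px. destruct (wo_total W x c) as [H|[H|H]]; auto. case Hn; eauto. }
  assert (HP : le_card {x | P x} (option (seg c))).
  { exists (fun x : {x | P x} => match excluded_middle_informative (wo_lt (proj1_sig x) c) with
       | left h => Some (exist (fun x => wo_lt x c) _ h) | right _ => None end).
    intros [x px] [y py]; simpl.
    destruct (excluded_middle_informative (wo_lt x c)) as [h1|h1],
             (excluded_middle_informative (wo_lt y c)) as [h2|h2]; intro E; try discriminate.
    - injection E as E. now apply proj1_sig_inj.
    - apply proj1_sig_inj; simpl. destruct (Hmax x px), (Hmax y py); subst; tauto. }
  destruct (infinite_or_Fin (seg c)) as [Hc|[n Hc]].
  - exact (Hsmall c Pc (le_card_trans _ _ _ HP (option_le_card_infinite _ Hc))).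
  - apply (Fin_not_infinite (S n)).
    exact (le_card_trans _ _ _ Hinf (le_card_trans _ _ _ HP (option_le_card_Fin _ _ Hc))).
Qed.

(** * Hessenberg's theorem *)

Definition wo_max {W : woType} (p : W * W) : W :=
  if excluded_middle_informative (wo_lt (fst p) (snd p)) then snd p else fst p.

Lemma wo_max_cases (W : woType) (p : W * W) : wo_max p = fst p \/ wo_max p = snd p.
Proof. unfold wo_max. destruct (excluded_middle_informative _); auto. Qed.

Lemma wo_max_ge (W : woType) (p : W * W) : wle (fst p) (wo_max p) /\ wle (snd p) (wo_max p).
Proof.
  unfold wo_max, wle. destruct (excluded_middle_informative _) as [H|H]; [auto|].
  split; [now right|].
  destruct (wo_total W (fst p) (snd p)) as [?|[?|?]]; [contradiction|now right|now left].
Qed.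

Definition goedel_lt {W : woType} (p q : W * W) : Prop :=
  slexprod W (W * W) wo_lt (slexprod W W wo_lt wo_lt) (wo_max p, p) (wo_max q, q).

Lemma goedel_lt_wf (W : woType) : well_founded (@goedel_lt W).
Proof.
  apply (wf_inverse_image _ _ _ (fun p => (wo_max p, p))).
  apply wf_slexprod; [|apply wf_slexprod]; apply wo_wf.
Qed.

Lemma goedel_lt_total (W : woType) (p q : W * W) : p <> q -> goedel_lt p q \/ goedel_lt q p.
Proof.
  intro Hne. unfold goedel_lt.
  destruct (wo_total W (wo_max p) (wo_max q)) as [H|[H|H]];
    [left; now apply left_slex| |right; now apply left_slex].
  rewrite H. destruct p as [a b], q as [a' b'].
  destruct (wo_total W a a') as [Ha|[<-|Ha]];
    [left|destruct (wo_total W b b') as [Hb|[<-|Hb]]; [left|case Hne; reflexivity|right]|right];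
    apply right_slex; now constructor.
Qed.

Lemma goedel_lt_bound (W : woType) (p q : W * W) (d : W) :
  goedel_lt q p -> wo_lt (wo_max p) d -> wo_lt (fst q) d /\ wo_lt (snd q) d.
Proof.
  intros Hqp Hd. assert (Hm : wle (wo_max q) (wo_max p)) by (inversion Hqp; unfold wle; auto).
  destruct (wo_max_ge W q) as [H1 H2].
  pose proof (wle_lt_trans _ _ _ _ Hm Hd) as Hq.
  split; eapply wle_lt_trans; eauto.
Qed.

(* Unless a single segment already dominates [P], the Gödel-predecessors of a pair in [P × P]
   lie in some [seg d × seg d ≈ seg d] with [d] in [P], which is smaller than [P]. *)
Lemma le_card_square_down_closed (W : woType) (P : W -> Prop) :
  (forall x y, P y -> wo_lt x y -> P x) -> infinite {x | P x} ->
  (forall a, P a -> infinite (seg a) -> le_card (seg a * seg a) (seg a)) ->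
  le_card ({x | P x} * {x | P x}) {x | P x}.
Proof.
  intros Hdown Hinf IH.
  destruct (classic (exists b, P b /\ le_card {x | P x} (seg b))) as [[b [Pb Hb]]|Hlarge].
  - assert (Hbelow : le_card (seg b) {x | P x}) by (apply le_card_sub; eauto).
    apply (le_card_trans _ _ _ (le_card_prod _ _ _ _ Hb Hb)), (le_card_trans _ (seg b)); [|exact Hbelow].
    exact (IH b Pb (le_card_trans _ _ _ Hinf Hb)).
  - assert (Hsmall : forall b, P b -> ~ le_card {x | P x} (seg b)) by eauto.
    pose proof (exists_gt_in_down_closed W P Hdown Hinf Hsmall) as Hgt.
    set (T := {q : W * W | P (fst q) /\ P (snd q)}).
    assert (HT : le_card T {x | P x}).
    { apply (greedy_injection T _ (fun q r => goedel_lt (proj1_sig q) (proj1_sig r))).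
      - apply wf_inverse_image, goedel_lt_wf.
      - intros q r Hne. apply goedel_lt_total. intro E. apply Hne, proj1_sig_inj, E.
      - intros [p [P1 P2]] Hp.
        assert (Pm : P (wo_max p)) by (destruct (wo_max_cases W p) as [-> | ->]; assumption).
        destruct (Hgt _ Pm) as [d [Pd Hd]].
        assert (Hpred : le_card {q : T | goedel_lt (proj1_sig q) p} (seg d * seg d)).
        { exists (fun q => let h := goedel_lt_bound W p _ d (proj2_sig q) Hd in
                   (exist (fun x => wo_lt x d) _ (proj1 h), exist (fun x => wo_lt x d) _ (proj2 h))).
          intros [[q ?] ?] [[r ?] ?] E. injection E as E1 E2.
          do 2 apply proj1_sig_inj. simpl. now rewrite (surjective_pairing q), E1, E2, <- surjective_pairing. }
        destruct (infinite_or_Fin (seg d)) as [Hd'|[n Hn]].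
        + apply (Hsmall d Pd), (le_card_trans _ _ _ Hp), (le_card_trans _ _ _ Hpred), IH; assumption.
        + apply (Fin_not_infinite (n * n)), (le_card_trans _ _ _ Hinf), (le_card_trans _ _ _ Hp),
            (le_card_trans _ _ _ Hpred), le_card_prod_Fin; assumption. }
    apply (le_card_trans _ T); [|exact HT].
    exists (fun ab => exist (fun q => P (fst q) /\ P (snd q)) (proj1_sig (fst ab), proj1_sig (snd ab))
                       (conj (proj2_sig (fst ab)) (proj2_sig (snd ab)))).
    intros [a b] [a' b'] E. apply (f_equal (@proj1_sig _ _)) in E. injection E as Ea Eb.
    now rewrite (proj1_sig_inj a a' Ea), (proj1_sig_inj b b' Eb).
Qed.

Lemma le_card_square_seg (W : woType) (a : W) : infinite (seg a) -> le_card (seg a * seg a) (seg a).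
Proof.
  induction a as [a IH] using (well_founded_induction (wo_wf W)). intro Hinf.
  apply (le_card_square_down_closed W (fun x => wo_lt x a)); [|exact Hinf|exact IH].
  intros x y Hy Hxy. exact (wo_trans W _ _ _ Hxy Hy).
Qed.

Lemma le_card_True (T : Type) : le_card T {x : T | True}.
Proof. exists (fun x => exist _ x I). intros x y E. exact (f_equal (@proj1_sig _ _) E). Qed.

Theorem hessenberg (W : woType) : infinite W -> le_card (W * W) W.
Proof.
  intro Hinf. pose proof (le_card_True W) as HT.
  apply (le_card_trans _ _ _ (le_card_prod _ _ _ _ HT HT)), (le_card_trans _ {x : W | True});
    [|apply le_card_sig].
  apply le_card_square_down_closed; auto.
  - exact (le_card_trans _ _ _ Hinf HT).
  - intros a _. apply le_card_square_seg.
Qed.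

(** * Cardinal arithmetic below an infinite well-order *)

Lemma bool_lt_card_infinite (W : Type) : infinite W -> lt_card bool W.
Proof. intro HW. exact (lt_card_Fin_infinite _ _ 2 HW bool_le_Fin2). Qed.

Definition sub_wo (W : woType) (P : W -> Prop) : woType.
Proof.
  refine (@WOType {x : W | P x} (fun a b => wo_lt (proj1_sig a) (proj1_sig b)) _ _ _ _).
  - intros [x px]; apply wo_irrefl.
  - intros [x ?] [y ?] [z ?]; simpl; apply wo_trans.
  - intros [x px] [y py]; simpl. destruct (wo_total W x y) as [H|[H|H]]; auto.
    right; left. now apply proj1_sig_inj.
  - apply (wf_inverse_image _ _ wo_lt (@proj1_sig _ _)), wo_wf.
Defined.

Lemma le_card_wo_equipotent (W : woType) (X : Type) :
  le_card X W -> exists S : woType, le_card X S /\ le_card S X.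
Proof.
  intros [h Hh]. exists (sub_wo W (fun w => exists x, h x = w)).
  set (hr := fun x => exist (fun w => exists x, h x = w) (h x) (ex_intro _ x eq_refl)). split.
  - exists hr. intros x y E. apply Hh. exact (f_equal (@proj1_sig _ _) E).
  - apply (le_card_surj hr). intros [w [x Hx]]. exists x. now apply proj1_sig_inj.
Qed.

Lemma lt_card_square (W S : woType) : infinite W -> lt_card S W -> lt_card (S * S) W.
Proof.
  intros HW HS. destruct (infinite_or_Fin S) as [Hi|[n Hn]].
  - exact (le_lt_card_trans _ _ _ (hessenberg S Hi) HS).
  - apply (lt_card_Fin_infinite _ _ (n * n) HW), le_card_prod_Fin; assumption.
Qed.

Lemma lt_card_prod (W : woType) (X Y : Type) :
  infinite W -> lt_card X W -> lt_card Y W -> lt_card (X * Y) W.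
Proof.
  intros HW HX HY.
  destruct (le_card_wo_equipotent W X (proj1 HX)) as [SX [HX1 HX2]].
  destruct (le_card_wo_equipotent W Y (proj1 HY)) as [SY [HY1 HY2]].
  destruct (le_card_wo_total SX SY) as [H|H].
  - apply (le_lt_card_trans _ (SY * SY)).
    + exact (le_card_prod _ _ _ _ (le_card_trans _ _ _ HX1 H) HY1).
    + exact (lt_card_square W SY HW (le_lt_card_trans _ _ _ HY2 HY)).
  - apply (le_lt_card_trans _ (SX * SX)).
    + exact (le_card_prod _ _ _ _ HX1 (le_card_trans _ _ _ HY1 H)).
    + exact (lt_card_square W SX HW (le_lt_card_trans _ _ _ HX2 HX)).
Qed.

Lemma le_card_bool_prod_absorb (Z : woType) (A : Type) :
  infinite A -> le_card A (bool * Z) -> le_card A Z.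
Proof.
  intros HA H. destruct (infinite_or_Fin Z) as [HZ|[n Hn]].
  - apply (le_card_trans _ _ _ H), (le_card_trans _ (Z * Z)); [|exact (hessenberg Z HZ)].
    exact (le_card_prod _ _ _ _ (proj1 (bool_lt_card_infinite Z HZ)) (le_card_refl Z)).
  - case (Fin_not_infinite (2 * n)).
    apply (le_card_trans _ _ _ HA), (le_card_trans _ _ _ H), le_card_prod_Fin; [exact bool_le_Fin2|exact Hn].
Qed.

Lemma le_card_compl_small (W : woType) (A : W -> Prop) :
  infinite W -> lt_card {x | A x} W -> le_card W {x | ~ A x}.
Proof.
  intros HW HA. apply NNPP; intro Hn.
  assert (Hsplit : forall Z : woType, le_card {x | A x} Z -> le_card {x | ~ A x} Z -> le_card W (bool * Z)).
  { intros Z [f1 H1] [f2 H2].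
    exists (fun x => match excluded_middle_informative (A x) with
       | left h => (true, f1 (exist _ x h)) | right h => (false, f2 (exist _ x h)) end).
    intros x y. destruct (excluded_middle_informative (A x)), (excluded_middle_informative (A y));
      intro E; [| apply (f_equal fst) in E; discriminate ..|].
    - apply (f_equal snd), H1 in E. exact (f_equal (@proj1_sig _ _) E).
    - apply (f_equal snd), H2 in E. exact (f_equal (@proj1_sig _ _) E). }
  destruct (le_card_wo_total (sub_wo W A) {x | ~ A x}) as [H|H].
  - apply Hn, (le_card_bool_prod_absorb (sub_wo W (fun x => ~ A x))); auto.
    apply Hsplit; [exact H|apply le_card_refl].
  - apply (proj2 HA), (le_card_bool_prod_absorb (sub_wo W A)); auto.
    apply Hsplit; [apply le_card_refl|exact H].
Qed.

Lemma le_card_union (I D Z : Type) (d : I -> D -> Prop) :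
  (forall i, le_card {p | d i p} Z) -> le_card {p | exists i, d i p} (I * Z).
Proof.
  intro H. destruct (classic (inhabited {p | exists i, d i p})) as [[x0]|nU];
    [|exact (le_card_empty _ _ nU)].
  assert (iI : inhabited I) by (destruct x0 as [p [i _]]; exact (inhabits i)).
  assert (iZ : inhabited Z) by (destruct x0 as [p [i Hi]]; destruct (H i) as [h _];
                                exact (inhabits (h (exist _ p Hi)))).
  set (h := fun i => proj1_sig (constructive_indefinite_description _ (H i))).
  assert (Hh : forall i, inj (h i))
    by (intro i; unfold h; destruct (constructive_indefinite_description _ (H i)); auto).
  set (ix := fun p => epsilon iI (fun i => d i p)).
  set (code := fun i p => match excluded_middle_informative (d i p) with
                          | left e => h i (exist (fun p => d i p) p e) | right _ => epsilon iZ (fun _ => True) end).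
  exists (fun u => (ix (proj1_sig u), code (ix (proj1_sig u)) (proj1_sig u))).
  intros [p Hp] [q Hq] E. simpl in E. injection E as E1 E2.
  assert (Dp : d (ix p) p) by (apply epsilon_spec; exact Hp).
  assert (Dq : d (ix q) q) by (apply epsilon_spec; exact Hq).
  rewrite E1 in E2, Dp. unfold code in E2.
  destruct (excluded_middle_informative (d (ix q) p)) as [e1|]; [|contradiction].
  destruct (excluded_middle_informative (d (ix q) q)) as [e2|]; [|contradiction].
  apply Hh in E2. apply proj1_sig_inj. exact (f_equal (@proj1_sig _ _) E2).
Qed.

Lemma cardinal_no_max (W : woType) : is_cardinal W -> infinite W -> forall a : W, exists b, wo_lt a b.
Proof.
  intros HC HI a. pose proof (le_card_True W) as HT.
  destruct (exists_gt_in_down_closed W (fun _ => True)) with (c := a) as [b [_ Hb]]; eauto.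
  - exact (le_card_trans _ _ _ HI HT).
  - intros b _ H. exact (proj2 (HC b) (le_card_trans _ _ _ HT H)).
Qed.

Lemma lt_card_singleton (C D : Type) (a : D) : infinite C -> lt_card {i : D | i = a} C.
Proof.
  intros [e He]. split.
  - exists (fun _ => e 0). intros [x Hx] [y Hy] _. apply proj1_sig_inj; simpl; congruence.
  - intros [f Hf]. assert (H : f (e 0) = f (e 1)).
    { apply proj1_sig_inj; destruct (f (e 0)), (f (e 1)); simpl; congruence. }
    apply Hf, He in H. discriminate.
Qed.

Lemma le_card_seg_mono (W : woType) (a b : W) : wle a b -> le_card (seg a) (seg b).
Proof.
  intro H. apply le_card_sub. intros x Hx. destruct H as [H| <-]; [exact (wo_trans W _ _ _ Hx H)|exact Hx].
Qed.

(** * Ideals of κ-meagre sets *)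

Lemma nowhere_dense_sub {X : Type} (Bs : (X -> Prop) -> Prop) (N N' : X -> Prop) :
  (forall x, N' x -> N x) -> nowhere_dense Bs N -> nowhere_dense Bs N'.
Proof.
  intros Hs Hn x [B [HB [Bx HBc]]]. apply (Hn x). exists B. repeat split; auto.
  intros y By B' HB' B'y. destruct (HBc y By B' HB' B'y) as [z [? ?]]. eauto.
Qed.

Lemma nowhere_dense_empty {X : Type} (Bs : (X -> Prop) -> Prop) : nowhere_dense Bs (fun _ : X => False).
Proof. intros x [B [HB [Bx HBc]]]. destruct (HBc x Bx B HB Bx) as [z [_ []]]. Qed.

Lemma meagre_ext {K X : Type} (Bs : (X -> Prop) -> Prop) (S S' : X -> Prop) :
  (forall x, S x <-> S' x) -> meagre_k K Bs S -> meagre_k K Bs S'.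
Proof. intros H [F [HF HS]]. exists F. split; auto. intro x. rewrite <- H. apply HS. Qed.

(* Reindex the [A]-indexed union of [K]-indexed families through [A × K ≤ K × K ≤ K]. *)
Lemma meagre_union (K X A : Type) (Bs : (X -> Prop) -> Prop) (F : A -> X -> Prop) :
  le_card (K * K) K -> le_card A K -> (forall a, meagre_k K Bs (F a)) ->
  meagre_k K Bs (fun x => exists a, F a x).
Proof.
  intros [p Hp] [q Hq] HF.
  set (G := fun a => proj1_sig (constructive_indefinite_description _ (HF a))).
  assert (HG : forall a, (forall k, nowhere_dense Bs (G a k)) /\ forall x, F a x <-> exists k, G a k x)
    by (intro a; unfold G; exact (proj2_sig (constructive_indefinite_description _ (HF a)))).
  exists (fun k x => exists a k', p (q a, k') = k /\ G a k' x). split.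
  - intro k. destruct (classic (exists a k', p (q a, k') = k)) as [[a [k' <-]]|Hno].
    + apply (nowhere_dense_sub Bs (G a k')); [|apply HG].
      intros x [a2 [k2 [E Gx]]]. apply Hp in E. injection E as Ea <-. apply Hq in Ea as ->. exact Gx.
    + apply (nowhere_dense_sub Bs (fun _ => False)); [|apply nowhere_dense_empty].
      intros x [a [k' [E _]]]. eauto.
  - intro x. split.
    + intros [a Fa]. apply (proj2 (HG a)) in Fa as [k' Gk]. eauto.
    + intros [k [a [k' [_ Gk]]]]. exists a. apply (proj2 (HG a)). eauto.
Qed.

Lemma add_cov_of_cover (K L X : Type) (Bs : (X -> Prop) -> Prop) :
  (forall A : Type, lt_card A L -> le_card A K) -> le_card (K * K) K ->
  ~ meagre_k K Bs (fun _ => True) ->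
  (exists F : L -> X -> Prop, (forall l, meagre_k K Bs (F l)) /\ forall x, exists l, F l x) ->
  add_is (meagre_k K Bs) L /\ cov_is (meagre_k K Bs) L.
Proof.
  intros HA HKK Hbaire [F [HF Hcov]].
  assert (Hall : forall (A : Type) (G : A -> X -> Prop), (forall x, exists a, G a x) ->
                 meagre_k K Bs (fun x => exists a, G a x) -> meagre_k K Bs (fun _ => True)).
  { intros A G HG. apply meagre_ext. intro x; split; [intros _; exact I|intros _; apply HG]. }
  split; split.
  - intros A G HAL HG. apply meagre_union; auto.
  - exists F. split; [exact HF|]. intro H. exact (Hbaire (Hall _ _ Hcov H)).
  - intros A G HAL HG Hc. exact (Hbaire (Hall _ _ Hc (meagre_union _ _ _ _ _ HKK (HA _ HAL) HG))).
  - now exists F.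
Qed.

(* A point in none of the [F l] decodes each of [L] distinct values at some position in [K];
   distinct values need distinct positions, so [L ≤ K]. *)
Lemma cover_of_decoding (K L V X : Type) (Bs : (X -> Prop) -> Prop) (decode : X -> K -> V -> Prop) :
  inhabited K -> le_card L V -> ~ le_card L K ->
  (forall x j v v', decode x j v -> decode x j v' -> v = v') ->
  (forall v, nowhere_dense Bs (fun x => forall j, ~ decode x j v)) ->
  exists F : L -> X -> Prop, (forall l, meagre_k K Bs (F l)) /\ forall x, exists l, F l x.
Proof.
  intros [k0] [e He] HLK Hfun Hnd.
  exists (fun l x => forall j, ~ decode x j (e l)). split.
  - intro l. exists (fun _ x => forall j, ~ decode x j (e l)). split; [intro; apply Hnd|].
    intro x. split; [intro H; now exists k0|intros [_ H]; exact H].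
  - intro x. apply NNPP; intro Hn. apply HLK.
    assert (H : forall l, exists j, decode x j (e l)).
    { intro l. apply NNPP; intro H. apply Hn. exists l. intros j Dj. eauto. }
    exists (fun l => proj1_sig (constructive_indefinite_description _ (H l))).
    intros l l' E.
    destruct (constructive_indefinite_description _ (H l)) as [j Hj].
    destruct (constructive_indefinite_description _ (H l')) as [j' Hj']. simpl in E. subst j'.
    apply He. eauto.
Qed.

(** * A Baire category theorem *)

Section BaireCategory.

Variables (K : woType) (D R : Type) (Bs : ((D -> R) -> Prop) -> Prop) (small : (D -> Prop) -> Prop).
Variable r0 : R.

Hypothesis small_ext : forall d d', (forall p, d p <-> d' p) -> small d -> small d'.
Hypothesis small_cyl_open :
  forall d s, small d -> exists B, Bs B /\ B s /\ forall f, B f -> cyl d s f.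
Hypothesis base_small_cyl : forall B, Bs B -> exists d s, small d /\ forall f, B f <-> cyl d s f.
Hypothesis small_union2 : forall d1 d2, small d1 -> small d2 -> small (fun p => d1 p \/ d2 p).
Hypothesis small_union_seg : forall (k : K) (dd : K -> D -> Prop),
  (forall i, wo_lt i k -> small (dd i)) -> small (fun p => exists i, wo_lt i k /\ dd i p).

Record condition := Cond { cdom : D -> Prop; cval : D -> R }.

Definition extends (c' c : condition) : Prop :=
  forall p, cdom c p -> cdom c' p /\ cval c' p = cval c p.

Lemma extends_trans (c1 c2 c3 : condition) : extends c3 c2 -> extends c2 c1 -> extends c3 c1.
Proof.
  intros H32 H21 p Hp. destruct (H21 p Hp) as [Hp2 E2]. destruct (H32 p Hp2) as [Hp3 E3].
  split; [exact Hp3|congruence].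
Qed.

Definition avoids (c : condition) (N : (D -> R) -> Prop) : Prop :=
  forall f, cyl (cdom c) (cval c) f -> ~ N f.

(* Below [cval c] the nowhere dense [N] misses some basic set [[s]]; take the union of both domains. *)
Lemma extend_avoiding (c : condition) (N : (D -> R) -> Prop) :
  small (cdom c) -> nowhere_dense Bs N ->
  exists c', small (cdom c') /\ extends c' c /\ avoids c' N.
Proof.
  intros Hc HN. destruct (small_cyl_open _ (cval c) Hc) as [B [HB [Bc HBc]]].
  assert (Hnot : ~ (forall y, B y -> closure Bs N y)).
  { intro H. apply (HN (cval c)). exists B. auto. }
  apply not_all_ex_not in Hnot as [y Hy]. apply imply_to_and in Hy as [By Hcl].
  apply not_all_ex_not in Hcl as [B' Hcl]. apply imply_to_and in Hcl as [HB' Hcl].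
  apply imply_to_and in Hcl as [B'y Hcl].
  destruct (base_small_cyl B' HB') as [d [s [Hd HB'e]]].
  exists (Cond (fun p => cdom c p \/ d p) y). simpl. split; [|split].
  - exact (small_union2 _ _ Hc Hd).
  - intros p Hp. split; [now left|exact (HBc y By p Hp)].
  - intros f Hf Nf. apply Hcl. exists f. split; [|exact Nf]. apply HB'e. intros i Hi.
    rewrite (Hf i (or_intror Hi)). exact (proj1 (HB'e y) B'y i Hi).
Qed.

Definition glue (S : K -> Prop) (st : forall i, S i -> condition) : condition :=
  Cond (fun p => exists i h, cdom (st i h) p)
       (fun p => epsilon (inhabits r0) (fun r => exists i h, cdom (st i h) p /\ cval (st i h) p = r)).

Lemma glue_extends (S : K -> Prop) (st : forall i, S i -> condition) :
  (forall i j (hi : S i) (hj : S j), wo_lt i j -> extends (st j hj) (st i hi)) ->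
  forall i hi, extends (glue S st) (st i hi).
Proof.
  intros Hcoh i hi p Hp. split; [now exists i, hi|]. simpl.
  assert (Hex : exists r, exists i h, cdom (st i h) p /\ cval (st i h) p = r) by eauto 6.
  destruct (epsilon_spec (inhabits r0) _ Hex) as [i' [hi' [Hp' <-]]].
  destruct (wo_total K i i') as [Hl|[<-|Hl]].
  - exact (proj2 (Hcoh i i' hi hi' Hl p Hp)).
  - now rewrite (proof_irrelevance _ hi hi').
  - symmetry. exact (proj2 (Hcoh i' i hi' hi Hl p Hp')).
Qed.

Section Construction.

Variable F : K -> (D -> R) -> Prop.
Hypothesis F_nowhere_dense : forall k, nowhere_dense Bs (F k).

Definition avoid_step (k : K) (c : condition) : condition :=
  epsilon (inhabits (Cond (fun _ => False) (fun _ => r0)))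
          (fun c' => small (cdom c') /\ extends c' c /\ avoids c' (F k)).

Definition stage : K -> condition :=
  wf_rec (wo_wf K) (fun k st => avoid_step k (glue (fun i => wo_lt i k) st)).

Lemma stage_spec (k : K) :
  small (cdom (stage k)) /\ (forall i, wo_lt i k -> extends (stage k) (stage i)) /\ avoids (stage k) (F k).
Proof.
  induction k as [k IH] using (well_founded_induction (wo_wf K)).
  set (U := glue (fun i => wo_lt i k) (fun i _ => stage i)).
  assert (HU : forall i (hi : wo_lt i k), extends U (stage i)).
  { apply (glue_extends (fun i => wo_lt i k) (fun i _ => stage i)).
    intros i j _ hj Hij. exact (proj1 (proj2 (IH j hj)) i Hij). }
  assert (Usmall : small (cdom U)).
  { apply (small_ext (fun p => exists i, wo_lt i k /\ cdom (stage i) p)).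
    - intro p; simpl. split; intros [i [h H]]; eauto.
    - apply small_union_seg. intros i hi. exact (proj1 (IH i hi)). }
  assert (E : stage k = avoid_step k U) by (unfold stage at 1; rewrite wf_rec_eq; reflexivity).
  destruct (extend_avoiding U (F k) Usmall (F_nowhere_dense k)) as [c' Hc'].
  assert (Hstep : small (cdom (avoid_step k U)) /\ extends (avoid_step k U) U /\ avoids (avoid_step k U) (F k))
    by (unfold avoid_step; apply epsilon_spec; eauto).
  rewrite <- E in Hstep. destruct Hstep as [Hs [Hext Hav]].
  split; [exact Hs|split; [|exact Hav]].
  intros i hi. exact (extends_trans _ _ _ Hext (HU i hi)).
Qed.

Lemma stages_not_covering : ~ forall f, exists k, F k f.
Proof.
  intro Hcov.
  set (G := glue (fun _ => True) (fun i _ => stage i)).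
  destruct (Hcov (cval G)) as [k Fk].
  apply (proj2 (proj2 (stage_spec k)) (cval G)); [|exact Fk].
  assert (HG : extends G (stage k)).
  { apply (glue_extends (fun _ => True) (fun i _ => stage i)); [|exact I].
    intros i j _ _ Hij. exact (proj1 (proj2 (stage_spec j)) i Hij). }
  intros p Hp. exact (proj2 (HG p Hp)).
Qed.

End Construction.

Theorem baire_category : ~ meagre_k K Bs (fun _ => True).
Proof.
  intros [F [HF Hcov]]. apply (stages_not_covering F HF).
  intro f. exact (proj1 (Hcov f) I).
Qed.

End BaireCategory.

Definition small_sets_bounded (W : woType) (C : Type) : Prop :=
  forall S : W -> Prop, lt_card {x | S x} C -> exists b, forall x, S x -> wo_lt x b.

Definition fits_in_segment (W : woType) : Prop :=
  forall X : Type, lt_card X W -> exists g : W, le_card X (seg g).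

Lemma lt_card_union (W : woType) (C I D : Type) (d : I -> D -> Prop) :
  infinite W -> is_cardinal W -> le_card C W -> small_sets_bounded W C -> fits_in_segment W ->
  (forall i, lt_card {p | d i p} W) -> lt_card I C -> lt_card {p | exists i, d i p} W.
Proof.
  intros HWi HWc HCW Hbnd Hfit Hd HI.
  assert (Hg : forall i, exists g, le_card {p | d i p} (seg g)) by (intro i; exact (Hfit _ (Hd i))).
  set (g := fun i => proj1_sig (constructive_indefinite_description _ (Hg i))).
  destruct (Hbnd (fun x => exists i, g i = x)) as [b Hb].
  { apply (le_lt_card_trans _ I); [|exact HI].
    apply (le_card_surj (fun i => exist (fun x => exists i, g i = x) (g i) (ex_intro _ i eq_refl))).
    intros [x [i E]]. exists i. now apply proj1_sig_inj. }
  apply (le_lt_card_trans _ (I * seg b)); [apply le_card_union|].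
  - intro i. apply (le_card_trans _ _ _ (proj2_sig (constructive_indefinite_description _ (Hg i)))).
    apply le_card_seg_mono. left. apply Hb. now exists i.
  - exact (lt_card_prod W _ _ HWi (lt_le_card_trans _ _ _ HI HCW) (HWc b)).
Qed.

Lemma baire_box (K W : woType) (D R : Type) (r0 : R) :
  infinite K -> is_cardinal K -> infinite W -> is_cardinal W -> le_card K W ->
  small_sets_bounded W K -> fits_in_segment W ->
  ~ meagre_k K (box_base W D R) (fun _ => True).
Proof.
  intros HKi HKc HWi HWc HKW Hbnd Hfit.
  assert (Hext : forall d d' : D -> Prop, (forall p, d p <-> d' p) ->
                 lt_card {p | d p} W -> lt_card {p | d' p} W).
  { intros d d' H. apply le_lt_card_trans, le_card_sub. intro p; apply H. }
  apply (baire_category K D R (box_base W D R) (fun d => lt_card {p | d p} W) r0 Hext).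
  - intros d s Hd. exists (cyl d s). split; [now exists d, s|]. split; [now intros i _|auto].
  - intros B [d [s [H1 H2]]]. now exists d, s.
  - intros d1 d2 H1 H2. apply (Hext (fun p => exists b : bool, (if b then d1 else d2) p)).
    + intro p. split; [intros [[] H]; auto|intros [H|H]; [exists true|exists false]; auto].
    + apply (lt_card_union W K bool D (fun b => if b then d1 else d2)); auto.
      * intros []; assumption.
      * exact (bool_lt_card_infinite K HKi).
  - intros k dd Hdd. apply (Hext (fun p => exists i : seg k, dd (proj1_sig i) p)).
    + intro p. split; [intros [[i hi] H]; eauto|intros [i [hi H]]; now exists (exist _ i hi)].
    + apply (lt_card_union W K (seg k) D (fun i => dd (proj1_sig i))); auto.
      * intros [i hi]. exact (Hdd i hi).
      * exact (HKc k).
Qed.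

Lemma bounded_union_seg (W K : woType) (k : K) : is_cardinal K -> small_sets_bounded W K ->
  forall dd : K -> W -> Prop, (forall i, wo_lt i k -> exists b, forall x, dd i x -> wo_lt x b) ->
  exists b, forall x, (exists i, wo_lt i k /\ dd i x) -> wo_lt x b.
Proof.
  intros HKc Hbnd dd Hdd.
  assert (iW : inhabited W).
  { destruct (Hbnd (fun _ => False)) as [b _]; [|exact (inhabits b)].
    apply (le_lt_card_trans _ (seg k)); [apply le_card_empty; intros [[x []]]|exact (HKc k)]. }
  set (bd := fun i => epsilon iW (fun b => forall x, dd i x -> wo_lt x b)).
  destruct (Hbnd (fun b => exists i, wo_lt i k /\ bd i = b)) as [b Hb].
  - apply (le_lt_card_trans _ (seg k)); [|exact (HKc k)].
    apply (le_card_surj (fun i : seg k => exist (fun b => exists i, wo_lt i k /\ bd i = b) (bd (proj1_sig i))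
       (ex_intro _ (proj1_sig i) (conj (proj2_sig i) eq_refl)))).
    intros [b' [i [hi E]]]. exists (exist _ i hi). now apply proj1_sig_inj.
  - exists b. intros x [i [hi Hx]]. apply (wo_trans W _ (bd i)); [|apply Hb; eauto].
    exact (epsilon_spec iW (fun b => forall x, dd i x -> wo_lt x b) (Hdd i hi) x Hx).
Qed.

Lemma baire_bounded (K M : woType) (R : Type) (r0 : R) :
  is_cardinal K -> small_sets_bounded M K -> ~ meagre_k K (bd_base M R) (fun _ => True).
Proof.
  intros HKc Hbnd.
  apply (baire_category K M R (bd_base M R) (fun d => exists b, forall x, d x -> wo_lt x b) r0).
  - intros d d' H [b Hb]. exists b. intros x Hx. apply Hb, H, Hx.
  - intros d s [b Hb]. exists (cyl (fun i => wo_lt i b) s). split; [now exists b, s|].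
    split; [now intros i _|]. intros f Hf i Hi. apply Hf, Hb, Hi.
  - intros B [a [s H]]. exists (fun i => wo_lt i a), s. split; [now exists a|exact H].
  - intros d1 d2 [b1 H1] [b2 H2].
    assert (Hup : forall (b b' : M) (d : M -> Prop), (forall x, d x -> wo_lt x b) -> wle b b' ->
                  forall x, d x -> wo_lt x b').
    { intros b b' d Hd [Hbb'| <-] x Hx; [exact (wo_trans M _ _ _ (Hd x Hx) Hbb')|exact (Hd x Hx)]. }
    destruct (wle_total M b1 b2) as [Hb|Hb]; [exists b2|exists b1]; intros x [Hx|Hx]; eauto.
  - intros k dd Hdd. exact (bounded_union_seg M K k HKc Hbnd dd Hdd).
Qed.

(** * Points that decode a value nowhere *)

Lemma nowhere_dense_intro {X : Type} (Bs : (X -> Prop) -> Prop) (N : X -> Prop) :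
  (forall B x, Bs B -> B x -> exists y, B y /\ exists B', Bs B' /\ B' y /\ forall z, B' z -> ~ N z) ->
  nowhere_dense Bs N.
Proof.
  intros H x [B [HB [Bx Hcl]]]. destruct (H B x HB Bx) as [y [By [B' [HB' [B'y HB'N]]]]].
  destruct (Hcl y By B' HB' B'y) as [z [B'z Nz]]. exact (HB'N z B'z Nz).
Qed.

Definition update {D R : Type} (x : D -> R) (q : D) (v : R) (i : D) : R :=
  if excluded_middle_informative (i = q) then v else x i.

Lemma update_eq {D R : Type} (x : D -> R) q v : update x q v q = v.
Proof. unfold update. destruct (excluded_middle_informative (q = q)); [reflexivity|contradiction]. Qed.

Lemma update_cyl {D R : Type} (dom : D -> Prop) (s x : D -> R) q v :
  ~ dom q -> cyl dom s x -> cyl dom s (update x q v).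
Proof.
  intros Hq Hx i Hi. unfold update.
  destruct (excluded_middle_informative (i = q)) as [->|]; [contradiction|exact (Hx i Hi)].
Qed.

Lemma nowhere_dense_box_miss (C D R : Type) (pi : C -> D) (v : R) : infinite C -> inj pi ->
  nowhere_dense (box_base C D R) (fun f => forall j, f (pi j) <> v).
Proof.
  intros HC Hpi. apply nowhere_dense_intro. intros B x [dom [s [Hdom HBe]]] Bx.
  assert (Hmiss : exists j, ~ dom (pi j)).
  { apply NNPP; intro Hn. apply (proj2 Hdom).
    exists (fun j => exist dom (pi j) (NNPP _ (fun H => Hn (ex_intro _ j H)))).
    intros j j' E. apply Hpi. exact (f_equal (@proj1_sig _ _) E). }
  destruct Hmiss as [j Hj]. set (y := update x (pi j) v).
  exists y. split; [apply HBe, update_cyl; [exact Hj|apply HBe, Bx]|].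
  exists (cyl (fun i => i = pi j) y). split; [|split; [now intros i _|]].
  - exists (fun i => i = pi j), y. split; [exact (lt_card_singleton C D _ HC)|now intro].
  - intros z Hz Nz. apply (Nz j). rewrite (Hz (pi j) eq_refl). apply update_eq.
Qed.

Lemma nowhere_dense_bounded_miss (M K : woType) (R : Type) (c : K -> M) (v : R) :
  (forall m : M, exists j, wo_lt m (c j)) ->
  nowhere_dense (bd_base M R) (fun f => forall j, f (c j) <> v).
Proof.
  intros Hc. apply nowhere_dense_intro. intros B x [a [s HBe]] Bx.
  destruct (Hc a) as [j Hj]. set (y := update x (c j) v).
  assert (Hj' : ~ wo_lt (c j) a) by (intro H; exact (wo_irrefl M a (wo_trans M _ _ _ Hj H))).
  exists y. split; [apply HBe, update_cyl; [exact Hj'|apply HBe, Bx]|].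
  destruct (Hc (c j)) as [j' Hj'']. exists (cyl (fun i => wo_lt i (c j')) y).
  split; [now exists (c j'), y|split; [now intros i _|]].
  intros z Hz Nz. apply (Nz j). rewrite (Hz (c j) Hj''). apply update_eq.
Qed.

Definition seg_pairing {W : woType} (g : W) : seg g * seg g -> seg g :=
  epsilon (inhabits (fun p : seg g * seg g => fst p)) (fun h => inj h).

Lemma seg_pairing_inj (W : woType) (g : W) : infinite (seg g) -> inj (seg_pairing g).
Proof. intro Hinf. unfold seg_pairing. apply epsilon_spec, le_card_square_seg, Hinf. Qed.

Definition column_large {W : woType} {R : Type} (P : R -> Prop) (f : W -> R) (g : W) (u : seg g) : Prop :=
  le_card (seg g) {b : seg g | P (f (proj1_sig (seg_pairing g (u, b))))}.

Definition marks {W : woType} {R : Type} (P : R -> Prop) (f : W -> R) (g v : W) : Prop :=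
  (exists h : wo_lt v g, column_large P f g (exist _ v h)) /\
  forall u : seg g, proj1_sig u <> v -> ~ column_large P f g u.

Lemma marks_unique {W : woType} {R : Type} (P : R -> Prop) (f : W -> R) (g v v' : W) :
  marks P f g v -> marks P f g v' -> v = v'.
Proof.
  intros [_ Hv] [[h' Hl'] _]. apply NNPP; intro Hne. apply (Hv (exist _ v' h')); [|exact Hl'].
  intro E. exact (Hne (eq_sym E)).
Qed.

(* Off the small domain of a basic set, write [P]-values exactly on the column of [v] below [c j]. *)
Lemma nowhere_dense_box_unmarked (M K : woType) (R : Type) (P : R -> Prop) (r1 r0 : R) (c : K -> M) (v : M) :
  P r1 -> ~ P r0 -> is_cardinal M ->
  (forall X, lt_card X M -> exists j, wo_lt v (c j) /\ infinite (seg (c j)) /\ lt_card X (seg (c j))) ->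
  nowhere_dense (box_base M M R) (fun f => forall j, ~ marks P f (c j) v).
Proof.
  intros P1 P0 HMc Habove. apply nowhere_dense_intro. intros B x [dom [s [Hdom HBe]]] Bx.
  destruct (Habove _ Hdom) as [j [hv [Hinf Hlt]]]. set (g := c j).
  pose proof (seg_pairing_inj M g Hinf) as Hpi.
  set (v0 := exist (fun x => wo_lt x g) v hv).
  set (col := fun i => exists b, proj1_sig (seg_pairing g (v0, b)) = i).
  set (y := fun i => if excluded_middle_informative (dom i) then x i
                     else if excluded_middle_informative (col i) then r1 else r0).
  exists y. split.
  { apply HBe. intros i Hi. unfold y.
    destruct (excluded_middle_informative (dom i)); [exact (proj1 (HBe x) Bx i Hi)|contradiction]. }
  exists (cyl (fun i => wo_lt i g) y). split; [exists (fun i => wo_lt i g), y; split; [apply HMc|now intro]|].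
  split; [now intros i _|]. intros z Hz Nz. apply (Nz j).
  assert (Hzy : forall b : seg g, z (proj1_sig b) = y (proj1_sig b)) by (intro b; exact (Hz _ (proj2_sig b))).
  assert (Hsmall : forall u, lt_card {b : seg g | dom (proj1_sig (seg_pairing g (u, b)))} (seg g)).
  { intro u. apply (le_lt_card_trans _ {i | dom i}); [|exact Hlt].
    exists (fun b => exist dom (proj1_sig (seg_pairing g (u, proj1_sig b))) (proj2_sig b)).
    intros b1 b2 E. apply (f_equal (@proj1_sig _ _)) in E. simpl in E.
    apply proj1_sig_inj, Hpi in E. injection E as E. now apply proj1_sig_inj. }
  split.
  - exists hv. unfold column_large. fold v0.
    apply (le_card_trans _ _ _ (le_card_compl_small (sub_wo M (fun x => wo_lt x g)) _ Hinf (Hsmall v0))).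
    apply le_card_sub. intros b Hb. rewrite Hzy. unfold y.
    destruct (excluded_middle_informative _) as [H|_]; [contradiction|].
    destruct (excluded_middle_informative _) as [_|H]; [exact P1|case H; now exists b].
  - intros u Hu Hl. apply (proj2 (Hsmall u)), (le_card_trans _ _ _ Hl), le_card_sub.
    intros b Hb. apply NNPP; intro Hd. rewrite Hzy in Hb. unfold y in Hb.
    destruct (excluded_middle_informative _) as [H|_]; [contradiction|].
    destruct (excluded_middle_informative _) as [[b' E]|_]; [|contradiction].
    apply proj1_sig_inj, Hpi in E. injection E as E1 _. apply Hu. rewrite <- E1. reflexivity.
Qed.

(** * A singular cardinal of cofinality κ *)

Lemma le_card_of_lt_succ (K : woType) (L A : Type) : is_succ_card K L -> lt_card A L -> le_card A K.
Proof.
  intros [HKL Hmin] HA. destruct (le_card_wo_total K A) as [H|H]; [|exact H].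
  apply NNPP; intro Hn. apply (proj2 HA), Hmin. now split.
Qed.

Lemma regular_fits_in_segment (W : woType) : small_sets_bounded W W -> fits_in_segment W.
Proof.
  intros Hb X [[h Hh] HWX]. destruct (Hb (fun w => exists x, h x = w)) as [b Hb'].
  - split; [apply le_card_sig|]. intro H. apply HWX, (le_card_trans _ _ _ H).
    apply (le_card_surj (fun x => exist (fun w => exists x, h x = w) (h x) (ex_intro _ x eq_refl))).
    intros [w [x Hx]]. exists x. now apply proj1_sig_inj.
  - exists b. exists (fun x => exist (fun w => wo_lt w b) (h x) (Hb' _ (ex_intro _ x eq_refl))).
    intros x y E. apply Hh. exact (f_equal (@proj1_sig _ _) E).
Qed.

Lemma wle_upper_bound (W : woType) (a b : W) : exists m, wle a m /\ wle b m.
Proof. destruct (wle_total W a b); [exists b|exists a]; split; auto; now right. Qed.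

Section SingularOfCofinalityKappa.

Variables (K M : woType) (L : Type).
Hypotheses (K_infinite : infinite K) (K_regular : regular K) (M_cardinal : is_cardinal M)
           (M_cofinality : cf_is M K) (K_lt_M : lt_card K M) (L_succ : is_succ_card K L).

Lemma K_cardinal : is_cardinal K.
Proof. exact (proj1 K_regular). Qed.

Lemma K_small_sets_bounded : small_sets_bounded K K.
Proof. exact (proj2 K_regular). Qed.

Lemma K_fits_in_segment : fits_in_segment K.
Proof. exact (regular_fits_in_segment K K_small_sets_bounded). Qed.

Lemma M_infinite : infinite M.
Proof. exact (le_card_trans _ _ _ K_infinite (proj1 K_lt_M)). Qed.

Lemma exists_cofinal_seq : exists c : K -> M, forall m, exists j, wo_lt m (c j).
Proof.
  destruct M_cofinality as [[C [HC [f [Hfi Hfs]]]] _].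
  exists (fun j => proj1_sig (proj1_sig (constructive_indefinite_description _ (Hfs j)))).
  intro m. destruct (cardinal_no_max M M_cardinal M_infinite m) as [m' Hm'].
  destruct (HC m') as [y [Cy Hy]]. exists (f (exist _ y Cy)).
  destruct (constructive_indefinite_description _ (Hfs (f (exist _ y Cy)))) as [x Hx]. simpl.
  apply Hfi in Hx as ->. simpl. destruct Hy as [<-|Hy]; [exact Hm'|exact (wo_trans M _ _ _ Hm' Hy)].
Qed.

Lemma M_small_sets_bounded : small_sets_bounded M K.
Proof.
  intros S HS. destruct M_cofinality as [_ Hmin]. destruct (classic (cofinal S)) as [Hco|Hnc].
  - case (proj2 HS (Hmin S Hco)).
  - apply not_all_ex_not in Hnc as [b Hb]. exists b. intros x Sx.
    destruct (wo_total M x b) as [H|[H|H]]; [exact H| |]; case Hb; exists x; auto.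
Qed.

(* [M] is the union of the [K] segments below a cofinal sequence, so not all of them are [≤ X]. *)
Lemma seg_above_small (c : K -> M) : (forall m, exists j, wo_lt m (c j)) ->
  forall X, lt_card X M -> exists g : M, lt_card X (seg g).
Proof.
  intros Hc X HX. apply NNPP; intro Hn.
  assert (Hseg : forall g : M, le_card (seg g) X).
  { intro g. apply NNPP; intro H. apply Hn. exists g. split; [|exact H].
    destruct (le_card_wo_total (sub_wo M (fun x => wo_lt x g)) X) as [H'|H']; [contradiction|exact H']. }
  apply (proj2 (lt_card_prod M K X M_infinite K_lt_M HX)).
  apply (le_card_trans _ {m : M | exists j, wo_lt m (c j)}).
  - exists (fun m => exist _ m (Hc m)). intros m m' E. exact (f_equal (@proj1_sig _ _) E).
  - apply le_card_union. intro j. exact (Hseg (c j)).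
Qed.

Lemma cofinal_seg_above (c : K -> M) : (forall m, exists j, wo_lt m (c j)) ->
  forall (v : M) X, lt_card X M -> exists j, wo_lt v (c j) /\ infinite (seg (c j)) /\ lt_card X (seg (c j)).
Proof.
  intros Hc v X HX.
  destruct (seg_above_small c Hc X HX) as [g1 Hg1].
  destruct (seg_above_small c Hc K K_lt_M) as [g2 Hg2].
  destruct (wle_upper_bound M g1 g2) as [a [Ha1 Ha2]].
  destruct (wle_upper_bound M a v) as [b [Hab Hvb]].
  destruct (Hc b) as [j Hj]. exists j.
  assert (Hmono : forall g, wle g a -> le_card (seg g) (seg (c j))).
  { intros g Hg. apply le_card_seg_mono. left. exact (wle_lt_trans M _ _ _ Hg (wle_lt_trans M _ _ _ Hab Hj)). }
  split; [exact (wle_lt_trans M _ _ _ Hvb Hj)|split].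
  - exact (le_card_trans _ _ _ K_infinite (le_card_trans _ _ _ (proj1 Hg2) (Hmono g2 Ha2))).
  - exact (lt_le_card_trans _ _ _ Hg1 (Hmono g1 Ha1)).
Qed.

Lemma M_fits_in_segment : fits_in_segment M.
Proof.
  intros X HX. destruct exists_cofinal_seq as [c Hc].
  destruct (seg_above_small c Hc X HX) as [g Hg]. exists g. exact (proj1 Hg).
Qed.

Lemma add_cov_of_decoding (X : Type) (Bs : (X -> Prop) -> Prop) (decode : X -> K -> M -> Prop) :
  ~ meagre_k K Bs (fun _ => True) ->
  (forall x j v v', decode x j v -> decode x j v' -> v = v') ->
  (forall v, nowhere_dense Bs (fun x => forall j, ~ decode x j v)) ->
  add_is (meagre_k K Bs) L /\ cov_is (meagre_k K Bs) L.
Proof.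
  intros Hbaire Hfun Hnd. apply add_cov_of_cover; [|exact (hessenberg K K_infinite)|exact Hbaire|].
  - intros A HA. exact (le_card_of_lt_succ K L A L_succ HA).
  - destruct K_infinite as [e _]. apply (cover_of_decoding K L M X Bs decode); auto.
    + exact (inhabits (e 0)).
    + exact (proj2 L_succ M K_lt_M).
    + exact (proj2 (proj1 L_succ)).
Qed.

Lemma M_two_points : exists m0 m1 : M, m0 <> m1.
Proof.
  destruct M_infinite as [e He]. exists (e 0), (e 1). intro E. apply He in E. discriminate.
Qed.

Lemma add_cov_box_kappa_kappa_mu :
  add_is (meagre_k K (box_base K K M)) L /\ cov_is (meagre_k K (box_base K K M)) L.
Proof.
  destruct M_two_points as [m0 _].
  apply (add_cov_of_decoding _ _ (fun f j v => f j = v)); [|congruence|].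
  - apply (baire_box K K K M m0); auto using K_cardinal, le_card_refl, K_small_sets_bounded, K_fits_in_segment.
  - intro v. apply (nowhere_dense_box_miss K K M (fun j => j) v K_infinite). now intros x y.
Qed.

Lemma add_cov_bounded_mu_mu :
  add_is (meagre_k K (bd_base M M)) L /\ cov_is (meagre_k K (bd_base M M)) L.
Proof.
  destruct M_two_points as [m0 _]. destruct exists_cofinal_seq as [c Hc].
  apply (add_cov_of_decoding _ _ (fun f j v => f (c j) = v)); [|congruence|].
  - exact (baire_bounded K M M m0 K_cardinal M_small_sets_bounded).
  - intro v. exact (nowhere_dense_bounded_miss M K M c v Hc).
Qed.

Lemma add_cov_box_kappa_mu_mu :
  add_is (meagre_k K (box_base K M M)) L /\ cov_is (meagre_k K (box_base K M M)) L.
Proof.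
  destruct M_two_points as [m0 _]. destruct (proj1 K_lt_M) as [io Hio].
  apply (add_cov_of_decoding _ _ (fun f j v => f (io j) = v)); [|congruence|].
  - apply (baire_box K K M M m0); auto using K_cardinal, le_card_refl, K_small_sets_bounded, K_fits_in_segment.
  - intro v. exact (nowhere_dense_box_miss K M M io v K_infinite Hio).
Qed.

Lemma add_cov_box_mu (R : Type) (r1 r0 : R) : r1 <> r0 ->
  add_is (meagre_k K (box_base M M R)) L /\ cov_is (meagre_k K (box_base M M R)) L.
Proof.
  intro Hr. destruct exists_cofinal_seq as [c Hc].
  apply (add_cov_of_decoding _ _ (fun f j v => marks (fun r => r = r1) f (c j) v)).
  - apply (baire_box K M M R r1); auto;
      [exact K_cardinal|exact M_infinite|exact (proj1 K_lt_M)|exact M_small_sets_bounded|exact M_fits_in_segment].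
  - intros f j v v'. apply marks_unique.
  - intro v. apply (nowhere_dense_box_unmarked M K R _ r1 r0 c v eq_refl (fun E => Hr (eq_sym E)) M_cardinal).
    exact (cofinal_seg_above c Hc v).
Qed.

Lemma add_cov_box_mu_mu_two :
  add_is (meagre_k K (box_base M M bool)) L /\ cov_is (meagre_k K (box_base M M bool)) L.
Proof. apply (add_cov_box_mu bool true false). discriminate. Qed.

Lemma add_cov_box_mu_mu_mu :
  add_is (meagre_k K (box_base M M M)) L /\ cov_is (meagre_k K (box_base M M M)) L.
Proof. destruct M_two_points as [m0 [m1 Hm]]. exact (add_cov_box_mu M m0 m1 Hm). Qed.

End SingularOfCofinalityKappa.

Theorem mainTheorem8 (K M : woType) (L : Type) :
  infinite K -> regular K ->
  is_cardinal M -> cf_is M K -> lt_card K M ->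
  is_succ_card K L ->
  let I1 := meagre_k K (box_base K K M) in
  let I2 := meagre_k K (bd_base M M) in
  let I3 := meagre_k K (box_base K M M) in
  let I4 := meagre_k K (box_base M M bool) in
  let I5 := meagre_k K (box_base M M M) in
  add_is I1 L /\ add_is I2 L /\ add_is I3 L /\ add_is I4 L /\ add_is I5 L /\
  cov_is I1 L /\ cov_is I2 L /\ cov_is I3 L /\ cov_is I4 L /\ cov_is I5 L.
Proof.
  intros HK Hreg HM Hcf HKM HL I1 I2 I3 I4 I5.
  pose proof (add_cov_box_kappa_kappa_mu K M L).
  pose proof (add_cov_bounded_mu_mu K M L).
  pose proof (add_cov_box_kappa_mu_mu K M L).
  pose proof (add_cov_box_mu_mu_two K M L).
  pose proof (add_cov_box_mu_mu_mu K M L).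
  tauto.
Qed.
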